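(* Let $Q=(q_0,\ldots,q_n)$ be a weights vector and let $V=(\mathbf{v}_0,\mathbf{v}_1,\ldots,\mathbf{v}_n)\in\mathrm{Mat}(n,n+1;\mathbb{Z})$ be a fan matrix of $\mathbb{P}(Q)$, i.e. $\sum_{j=0}^nq_j\mathbf{v}_j=0$ and $|\det(\mathbf{v}_1,\ldots,\mathbf{v}_n)|=q_0$. Then the weighted transverse matrix $(V^0)^*_Q=((V^0)^{-1})^T\cdot\delta\,\mathrm{diag}(1/q_1,\ldots,1/q_n)$, where $V^0=(\mathbf{v}_1,\ldots,\mathbf{v}_n)$ and $\delta=\mathrm{lcm}(q_0,\ldots,q_n)$, has integer entries.
   Context: A weights vector is an $(n+1)$-tuple of positive integers with gcd $1$. *)

From mathcomp Require Import all_boot all_order all_algebra.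
Set Implicit Arguments. Unset Strict Implicit. Unset Printing Implicit Defensive.
Import Order.TTheory GRing.Theory Num.Theory.
Local Open Scope ring_scope.

Definition weights_vector (n : nat) (Q : 'I_n.+1 -> nat) : Prop :=
  (forall i, (0 < Q i)%N) /\ (\big[gcdn/0%N]_(i < n.+1) Q i = 1%N).

Definition wlcm (n : nat) (Q : 'I_n.+1 -> nat) : nat :=
  \big[lcmn/1%N]_(i < n.+1) Q i.

Definition V0 (n : nat) (V : 'M[int]_(n, n.+1)) : 'M[int]_n :=
  \matrix_(i < n, j < n) V i (lift ord0 j).

Definition fan_matrix (n : nat) (Q : 'I_n.+1 -> nat) (V : 'M[int]_(n, n.+1)) : Prop :=
  (\sum_(j < n.+1) (Q j)%:Z *: col j V = 0) /\ `|\det (V0 V)| = (Q ord0)%:Z.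

Definition weighted_transverse (n : nat) (Q : 'I_n.+1 -> nat) (V : 'M[int]_(n, n.+1))
  : 'M[rat]_n :=
  (invmx (map_mx (fun z : int => z%:~R : rat) (V0 V)))^T
  *m ((wlcm Q)%:R *: diag_mx (\row_(j < n) ((Q (lift ord0 j))%:R)^-1)).

From mathcomp Require Import all_boot all_order all_algebra.
From mathcomp Require Import ring.
Set Implicit Arguments. Unset Strict Implicit. Unset Printing Implicit Defensive.
Import Order.TTheory GRing.Theory Num.Theory.
Local Open Scope ring_scope.

(* Write W = V^0, d = det W = +-q_0 and A = adj W, so that the (i,j) entry of
   the weighted transverse matrix is delta A_ji / (d q_j).  Row j of A pairs
   with v_k to d [j = k] for k >= 1 and, by the fan relation, with v_0 to
   -d q_j / q_0; hence d q_j divides every entry of (delta A) C whenever the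
   columns of C are columns of V.  Replacing v_m by v_0 in V^0 gives such a C
   with |det C| = q_m (Cramer's rule), and A C adj C = det C A shows that
   d q_j divides q_m delta A_ji for every m.  Since the q_m are coprime,
   d q_j divides delta A_ji. *)

Lemma dvdz_biggcd_mull (I : finType) (F : I -> nat) (D x : int) :
  (forall i, (D %| (F i)%:Z * x)%Z) -> (D %| (\big[gcdn/0%N]_i F i)%:Z * x)%Z.
Proof.
move=> DFx; rewrite dvdzE abszM /=; elim/big_ind: _ => //.
  by move=> a b Da Db; rewrite muln_gcdl dvdn_gcd Da Db.
by move=> i _; have := DFx i; rewrite dvdzE abszM.
Qed.

Lemma dvdz_det_mulmx n (A C : 'M[int]_n) (D : int) (j : 'I_n) :
  (forall l, (D %| (A *m C) j l)%Z) -> forall i, (D %| \det C * A j i)%Z.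
Proof.
move=> DAC i; have -> : \det C * A j i = (A *m C *m \adj C) j i.
  by rewrite -mulmxA mul_mx_adj mul_mx_scalar mxE.
by rewrite mxE; apply: rpred_sum => l _; apply: dvdz_mulr.
Qed.

Lemma dvdz_coprime_dets (I : finType) n (C : I -> 'M[int]_n) (A : 'M[int]_n)
    (D : int) (j : 'I_n) :
  \big[gcdn/0%N]_m `|\det (C m)|%N = 1%N ->
  (forall m l, (D %| (A *m C m) j l)%Z) -> forall i, (D %| A j i)%Z.
Proof.
move=> gcd1 DAC i; rewrite -[A j i]mul1r -[1]/(1%N : int) -gcd1.
apply: dvdz_biggcd_mull => m; have := dvdz_det_mulmx (DAC m) i.
by rewrite !dvdzE !abszM.
Qed.

Definition set_col (R : Type) m n (A : 'M[R]_(m, n)) (k : 'I_n) (v : 'cV[R]_m) :=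
  \matrix_(a, c) if c == k then v a 0 else A a c.

Lemma mul_set_col (R : pzSemiRingType) m n p (A : 'M[R]_(m, n)) (B : 'M_(n, p))
    k v :
  A *m set_col B k v = set_col (A *m B) k (A *m v).
Proof.
apply/matrixP => i c; rewrite !mxE.
by case: ifP => ck; apply: eq_bigr => l _; rewrite !mxE ?ck.
Qed.

Lemma det_set_col (R : comPzRingType) n (A : 'M[R]_n) k v :
  \det (set_col A k v) = (\adj A *m v) k ord0.
Proof.
rewrite (expand_det_col _ k) mxE; apply: eq_bigr => c _.
rewrite !mxE eqxx mulrC; congr (_ * _); rewrite /cofactor.
congr (_ * \det _); apply/matrixP => a b; rewrite !mxE.
by have /negbTE -> : lift k b != k by rewrite eq_sym neq_lift.
Qed.

Section FanMatrix.

Variables (n : nat) (Q : 'I_n.+1 -> nat) (V : 'M[int]_(n, n.+1)).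
Hypotheses (Q_gt0 : forall i, (0 < Q i)%N)
  (Q_gcd : \big[gcdn/0%N]_(i < n.+1) Q i = 1%N)
  (fan_relation : \sum_(j < n.+1) (Q j)%:Z *: col j V = 0)
  (fan_det : `|\det (V0 V)| = (Q ord0)%:Z).

Local Notation W := (V0 V).
Local Notation v0 := (col ord0 V).
Local Notation q j := (Q (lift ord0 j)).

Lemma det_V0_neq0 : \det W != 0.
Proof. by rewrite -normr_eq0 fan_det -lt0n. Qed.

Lemma adj_mul_col0 j : (Q ord0)%:Z * (\adj W *m v0) j ord0 = - \det W * (q j)%:Z.
Proof.
have v0E : (Q ord0)%:Z *: v0 = - \sum_(k < n) (q k)%:Z *: col k W.
  move/eqP: fan_relation; rewrite big_ord_recl addr_eq0 => /eqP ->.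
  by congr (- _); apply: eq_bigr => k _; apply/matrixP => a b; rewrite !mxE.
have adjW_col k : \adj W *m col k W = col k (\det W)%:M.
  by rewrite colE mulmxA mul_adj_mx -colE.
have := congr1 (fun X => (\adj W *m X) j ord0) v0E => /=.
rewrite -scalemxAr mxE => ->; rewrite mulmxN mulmx_sumr mxE summxE.
rewrite (bigD1 j) //= big1 => [|k kj]; rewrite -scalemxAr adjW_col !mxE.
  by rewrite eqxx mulr1n addr0 mulrC mulNr.
by rewrite eq_sym (negbTE kj) mulr0n mulr0.
Qed.

Lemma abs_det_set_col0 k : `|\det (set_col W k v0)| = (q k)%:Z.
Proof.
apply: (mulfI (_ : (Q ord0)%:Z != 0)); first by rewrite -lt0n.
have := congr1 Num.norm (adj_mul_col0 k).
by rewrite det_set_col !normrM normrN fan_det.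
Qed.

Definition fan_minor (m : 'I_n.+1) : 'M[int]_n :=
  if unlift ord0 m is Some k then set_col W k v0 else W.

Lemma abs_det_fan_minor m : `|\det (fan_minor m)|%N = Q m.
Proof.
apply/eqP; rewrite -eqz_nat abszE /fan_minor.
by case: unliftP => [k ->|->]; rewrite ?abs_det_set_col0 ?fan_det.
Qed.

Lemma weighted_transverseE i j :
  weighted_transverse Q V i j
  = ((wlcm Q)%:Z * \adj W j i)%:~R / (\det W * (q j)%:Z)%:~R.
Proof.
have unitW : map_mx (fun z : int => z%:~R : rat) W \in unitmx.
  by rewrite unitmxE unitfE det_map_mx intr_eq0 det_V0_neq0.
have adjE : \adj W j i = cofactor W i j by rewrite mxE.
rewrite adjE /weighted_transverse /invmx unitW -scalemxAr mxE mul_mx_diag !mxE.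
rewrite cofactor_map_mx det_map_mx.
have qj_neq0 : (q j)%:R != 0 :> rat by rewrite pnatr_eq0 -lt0n.
move: (cofactor W i j) det_V0_neq0 => a; move: (\det W) => d d_neq0.
by rewrite !intrM; field; rewrite qj_neq0 intr_eq0.
Qed.

Section Column.

Variable j : 'I_n.
Local Notation del := (wlcm Q)%:Z.
Local Notation D := (\det W * (q j)%:Z).

Lemma dvdz_lcm_adj_mul_V0 c : (D %| del * (\adj W *m W) j c)%Z.
Proof.
rewrite mul_adj_mx mxE; have [->|_] := eqVneq j c; last by rewrite mulr0 dvdz0.
by rewrite mulr1n mulrC dvdz_mul ?dvdzz // dvdzE (biglcmn_sup (lift ord0 c)).
Qed.

Lemma dvdz_lcm_adj_mul_col0 : (D %| del * (\adj W *m v0) j ord0)%Z.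
Proof.
have /dvdnP[c ->] : (Q ord0 %| wlcm Q)%N by apply: (biglcmn_sup ord0).
apply/dvdzP; exists (- c%:Z); rewrite PoszM -mulrA adj_mul_col0; ring.
Qed.

Lemma dvdz_lcm_adj_mul_fan_minor m c : (D %| del * (\adj W *m fan_minor m) j c)%Z.
Proof.
rewrite /fan_minor; case: unliftP => [k _|_]; last exact: dvdz_lcm_adj_mul_V0.
rewrite mul_set_col mxE; case: eqP => _.
  exact: dvdz_lcm_adj_mul_col0.
exact: dvdz_lcm_adj_mul_V0.
Qed.

Lemma dvdz_lcm_adj i : (D %| del * \adj W j i)%Z.
Proof.
have -> : del * \adj W j i = (del *: \adj W) j i by rewrite [RHS]mxE.
apply: (dvdz_coprime_dets (C := fan_minor)).
  by rewrite -Q_gcd; apply: eq_bigr => m _; rewrite abs_det_fan_minor.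
by move=> m l; rewrite -scalemxAl mxE; apply: dvdz_lcm_adj_mul_fan_minor.
Qed.

End Column.

End FanMatrix.

Theorem mainTheorem11 (n : nat) (Q : 'I_n.+1 -> nat) (V : 'M[int]_(n, n.+1)) :
  weights_vector Q -> fan_matrix Q V ->
  exists M : 'M[int]_n,
    weighted_transverse Q V = map_mx (fun z : int => z%:~R : rat) M.
Proof.
move=> [Q_gt0 Q_gcd] [fan_relation fan_det].
pose D (j : 'I_n) := \det (V0 V) * (Q (lift ord0 j))%:Z.
pose M := \matrix_(i, j) (((wlcm Q)%:Z * \adj (V0 V) j i) %/ D j)%Z.
exists M; apply/matrixP => i j.
rewrite (weighted_transverseE Q_gt0 fan_det) [RHS]mxE [M i j]mxE.
have D_neq0 : (D j)%:~R != 0 :> rat.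
  by rewrite intr_eq0 mulf_neq0 ?(det_V0_neq0 Q_gt0 fan_det) -?lt0n.
have := dvdz_lcm_adj Q_gt0 Q_gcd fan_relation fan_det j i.
by move=> /divzK {1}<-; rewrite intrM mulfK.
Qed.
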